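(* Let $G$ be a finite simple unmixed graph without isolated vertices and let $I_c(G)$ be its ideal of covers. If the graph $\mathcal{G}_{I_c(G)}$ is connected, then (a) $G$ has no duplicated vertices, and (b) every $4$-cycle of $G$ has an edge that does not satisfy the (P) property.
   Context: $G$ is unmixed if all minimal vertex covers (inclusion-minimal vertex sets meeting every edge) have equal size. $I_c(G)$ is generated by $\prod_{t\in C}t$ over minimal vertex covers $C$. With minimal vertex covers $C_1,\dots,C_r$, $\mathcal{G}_{I_c(G)}$ has vertex set $\{C_1,\ldots,C_r\}$ and $\{C_i,C_j\}$ ($i\ne j$) is an edge iff $|C_i\cup C_j|=|C_i|+1$. Two distinct vertices $t,t'$ are duplicated if $N_G(t)=N_G(t')$. An edge $e=\{t_1,t_2\}$ has the (P) property if for all edges $\{t_1,t_1'\}$ and $\{t_2,t_2'\}$ distinct from $e$, $\{t_1',t_2'\}$ is an edge of $G$. *)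

From mathcomp Require Import all_boot.
Set Implicit Arguments. Unset Strict Implicit. Unset Printing Implicit Defensive.

Definition simple_graph (T : finType) (e : rel T) : Prop :=
  symmetric e /\ irreflexive e.

Definition no_isolated_vertices (T : finType) (e : rel T) : Prop :=
  forall x : T, exists y : T, e x y.

Definition vertex_cover (T : finType) (e : rel T) (C : {set T}) : bool :=
  [forall x, forall y, e x y ==> (x \in C) || (y \in C)].

Definition min_vertex_cover (T : finType) (e : rel T) (C : {set T}) : bool :=
  minset (vertex_cover e) C.

Definition unmixed (T : finType) (e : rel T) : Prop :=
  forall C D : {set T}, min_vertex_cover e C -> min_vertex_cover e D -> #|C| = #|D|.

(* Edge relation of the graph G_{I_c(G)}: vertices are the minimal vertex
   covers (the generators prod_{t in C} t of I_c(G)), C ~ D iff C <> D and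
   |C u D| = |C| + 1. *)
Definition cover_graph_rel (T : finType) (e : rel T) : rel {set T} :=
  fun C D => [&& min_vertex_cover e C, min_vertex_cover e D, C != D &
                 #|C :|: D| == #|C|.+1].

Definition cover_graph_connected (T : finType) (e : rel T) : Prop :=
  forall C D : {set T}, min_vertex_cover e C -> min_vertex_cover e D ->
    connect (cover_graph_rel e) C D.

Definition nbhd (T : finType) (e : rel T) (t : T) : {set T} := [set u | e t u].

Definition duplicated (T : finType) (e : rel T) (t t' : T) : Prop :=
  t <> t' /\ nbhd e t = nbhd e t'.

Definition P_property (T : finType) (e : rel T) (t1 t2 : T) : Prop :=
  forall t1' t2' : T, e t1 t1' -> e t2 t2' -> t1' <> t2 -> t2' <> t1 -> e t1' t2'.

Definition four_cycle (T : finType) (e : rel T) (a b c d : T) : Prop :=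
  uniq [:: a; b; c; d] /\ e a b /\ e b c /\ e c d /\ e d a.

From mathcomp Require Import all_boot.
From mathcomp Require Import zify.
From Stdlib Require Import Classical.
Set Implicit Arguments. Unset Strict Implicit. Unset Printing Implicit Defensive.

(* In an unmixed graph, adjacent minimal covers C, D of the cover graph differ
   by exactly one vertex: #|C :\: D| = 1.  A non-isolated vertex u lies in some
   minimal cover and is missed by another, so if the cover graph is connected,
   u is dropped along some edge C -> D; hence no vertex v <> u lies in exactly
   the same minimal covers as u.  But duplicated vertices do, because the
   private neighbour of one of them outside a minimal cover is a neighbour of
   the other.  So do a and c on a path a - b - c whose two edges have the (P)
   property: such an edge never has both ends in a minimal cover, so a minimal
   cover contains a iff it misses b iff it contains c. *)

Lemma connect_exit (T : finType) (r : rel T) (P : pred T) x y :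
  connect r x y -> P x -> ~~ P y -> exists x', exists2 y', r x' y' & P x' && ~~ P y'.
Proof.
move=> /connectP [p rp ->] {y}.
elim: p x rp => [|z p IHp] x /=; first by move=> _ ->.
case/andP=> rxz rp Px; have [Pz|nPz] := boolP (P z); first exact: IHp.
by exists x, z; rewrite ?Px.
Qed.

Section MinimalVertexCovers.

Variables (T : finType) (e : rel T).
Hypothesis simple_e : simple_graph e.

Let e_sym : symmetric e. Proof. by case: simple_e. Qed.
Let e_irr : irreflexive e. Proof. by case: simple_e. Qed.

Lemma vertex_coverP (C : {set T}) :
  reflect (forall x y, e x y -> (x \in C) || (y \in C)) (vertex_cover e C).
Proof.
apply: (iffP forallP) => [cC x y exy | cC x].
  by have /forallP/(_ y)/implyP := cC x; apply.
by apply/forallP => y; apply/implyP; apply: cC.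
Qed.

Lemma min_vertex_cover_edge C x y :
  min_vertex_cover e C -> e x y -> (x \in C) || (y \in C).
Proof. by move=> /minsetp /vertex_coverP; apply. Qed.

Lemma min_vertex_cover_private_nbr C x :
  min_vertex_cover e C -> x \in C -> exists2 x', e x x' & x' \notin C.
Proof.
move=> /minsetP [/vertex_coverP cC minC] xC.
have [/existsP [x' /andP [exx' x'C]]|] := boolP [exists x', e x x' && (x' \notin C)].
  by exists x'.
rewrite negb_exists => /forallP nbrC.
have nbr_in y : e x y -> y \in C by move=> exy; have := nbrC y; rewrite exy negbK.
suff cCx : vertex_cover e (C :\ x) by move: xC; rewrite -(minC _ cCx (subD1set C x)) setD11.
apply/vertex_coverP => u v euv; rewrite !in_setD1.
have [ux | _] := eqVneq u x; rewrite /=.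
  subst u; rewrite nbr_in // andbT; apply/eqP => vx; by rewrite vx e_irr in euv.
have [vx | _] := eqVneq v x; last exact: cC.
by subst v; rewrite orbF nbr_in // e_sym.
Qed.

Lemma exists_min_vertex_cover_notin x :
  exists2 C, min_vertex_cover e C & x \notin C.
Proof.
have cCx : vertex_cover e (~: [set x]).
  apply/vertex_coverP => u v euv; rewrite !in_setC1.
  have [ux | //] := eqVneq u x; subst u; apply/eqP => vx.
  by rewrite vx e_irr in euv.
have [C minC sub] := minset_exists cCx.
by exists C => //; apply: contraTN sub => xC; apply/subsetPn; exists x; rewrite ?in_setC1 ?eqxx.
Qed.

Lemma exists_min_vertex_cover_in x y :
  e x y -> exists2 C, min_vertex_cover e C & x \in C.
Proof.
move=> exy; have [C minC yC] := exists_min_vertex_cover_notin y.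
by exists C => //; have := min_vertex_cover_edge minC exy; rewrite (negbTE yC) orbF.
Qed.

Lemma duplicated_min_vertex_cover t t' C :
  duplicated e t t' -> min_vertex_cover e C -> (t \in C) = (t' \in C).
Proof.
move=> [_ nbhd_eq] minC.
suff in_C s s' : nbhd e s = nbhd e s' -> s \in C -> s' \in C.
  by apply/idP/idP; apply: in_C; rewrite nbhd_eq.
move=> nbhd_ss' sC; have [z esz zC] := min_vertex_cover_private_nbr minC sC.
have : z \in nbhd e s' by rewrite -nbhd_ss' inE.
by rewrite inE => /(min_vertex_cover_edge minC); rewrite (negbTE zC) orbF.
Qed.

Lemma P_property_min_vertex_cover x y C :
  P_property e x y -> min_vertex_cover e C -> x \in C -> y \notin C.
Proof.
move=> Pxy minC xC; apply/negP => yC.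
have [x' exx' x'C] := min_vertex_cover_private_nbr minC xC.
have [y' eyy' y'C] := min_vertex_cover_private_nbr minC yC.
have x'y : x' <> y by move=> x'E; rewrite x'E yC in x'C.
have y'x : y' <> x by move=> y'E; rewrite y'E xC in y'C.
have := min_vertex_cover_edge minC (Pxy _ _ exx' eyy' x'y y'x).
by rewrite (negbTE x'C) (negbTE y'C).
Qed.

Lemma P_property_path_min_vertex_cover a b c C :
  e a b -> e b c -> P_property e a b -> P_property e b c ->
  min_vertex_cover e C -> (a \in C) = (c \in C).
Proof.
move=> eab ebc Pab Pbc minC; have [aC | aC] := boolP (a \in C).
  have /negbTE bC := P_property_min_vertex_cover Pab minC aC.
  by have := min_vertex_cover_edge minC ebc; rewrite bC.
have bC : b \in C by have := min_vertex_cover_edge minC eab; rewrite (negbTE aC).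
by rewrite (negbTE (P_property_min_vertex_cover Pbc minC bC)).
Qed.

Hypothesis unmixed_e : unmixed e.

Lemma cover_graph_rel_cardsD C D : cover_graph_rel e C D -> #|C :\: D| = 1.
Proof.
case/and4P=> minC minD _ /eqP cardCUD.
have := unmixed_e minC minD; have := cardsUI C D; have := cardsID D C.
lia.
Qed.

Hypothesis connected_e : cover_graph_connected e.

Lemma min_vertex_covers_separate u v :
  u != v -> (exists w, e u w) ->
  ~ (forall C, min_vertex_cover e C -> (u \in C) = (v \in C)).
Proof.
move=> uv [w euw] same.
have [C minC uC] := exists_min_vertex_cover_in euw.
have [D minD uD] := exists_min_vertex_cover_notin u.
have [C' [D' CD' /andP [uC' uD']]] :=
  connect_exit (P := fun X : {set T} => u \in X) (connected_e minC minD) uC uD.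
case/and4P: (CD') => minC' minD' _ _.
have /eqP/cards1P [z CDz] := cover_graph_rel_cardsD CD'.
have inCD x : x \in C' -> x \notin D' -> x = z.
  by move=> xC xD; apply/set1P; rewrite -CDz inE xD.
have vC' : v \in C' by rewrite -same.
have vD' : v \notin D' by rewrite -same.
by move: uv; rewrite (inCD u) // (inCD v) // eqxx.
Qed.

End MinimalVertexCovers.

Theorem theorem5p4 (T : finType) (e : rel T) :
  simple_graph e -> no_isolated_vertices e -> unmixed e ->
  cover_graph_connected e ->
  (forall t t' : T, ~ duplicated e t t') /\
  (forall a b c d : T, four_cycle e a b c d ->
     ~ P_property e a b \/ ~ P_property e b c \/
     ~ P_property e c d \/ ~ P_property e d a).
Proof.
move=> simple_e no_iso unmixed_e connected_e.
have separate := min_vertex_covers_separate simple_e unmixed_e connected_e.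
split=> [t t' dup | a b c d [uniq_abcd [eab [ebc _]]]].
  apply: (separate t t' _ (no_iso t)) => [|C]; last exact: duplicated_min_vertex_cover.
  by apply/eqP; case: dup.
have [Pab | ] := classic (P_property e a b); last by left.
right; left => Pbc.
have ac : a != c by apply: contraTneq uniq_abcd => ->; rewrite /= !inE eqxx orbT.
apply: (separate a c ac (ex_intro _ b eab)) => C.
exact: P_property_path_min_vertex_cover eab ebc Pab Pbc.
Qed.
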